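(* Let $z\in\mathbb{C}^n$ have unit-modulus entries, let $W\in\mathbb{C}^{n\times n}$ be Hermitian and $z$-discordant (i.e., $\|W\|_{\mathrm{op}} \leq 3\sqrt{n}$ and $\|Wz\|_\infty \leq 3\sqrt{n\log n}$), and let $C = zz^* + \sigma W$. Let $x\in\mathbb{C}^n$ satisfy $\|x\|_2^2 = n$ and $z^*Cz \leq x^*Cx$ (e.g., $x$ a global optimizer of $\max x^*Cx$ subject to $|x_1|=\cdots=|x_n|=1$), with global phase chosen so that $z^*x = |z^*x|$. The $\ell_2$ error bound $\|x-z\|_2 \leq 12\sigma$ (obtained by expanding $z^*Cz \leq x^*Cx$, dividing $n^2-|z^*x|^2 \leq \sigma(x^*Wx - z^*Wz)$ by $n+|z^*x| \geq n$, and using $x^*Wx - z^*Wz \leq \|x-z\|_2\|W\|_{\mathrm{op}}\|x+z\|_2$) can be bootstrapped to reduce the constant: assuming $\|x-z\|_2 \leq \alpha\sigma$ and $\sigma \leq t\sqrt{n}$, one obtains $\|x-z\|_2 \leq \alpha_k\sigma$ for all $k$, with $\alpha_0 = 12$ and $\alpha_{k+1} = 6 + (t/2)^2\alpha_k^3$. For $t < 1/(6\sqrt{2})$ small enough, $\alpha_k$ converges arbitrarily close to $6$. For example, if $\sigma \leq \sqrt{n}/12$, then $\|x-z\|_2 \leq 6.5\sigma$.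
   Context: Angular synchronization: measurements $C = zz^*+\sigma W$ of relative phases; the maximum likelihood estimator solves $\max_{x} x^*Cx$ subject to $|x_i|=1$ for all $i$. The basic bound $\|x-z\|_2\leq 12\sigma$ is pessimistic because it uses $n+|z^*x|\geq n$ although $n+|z^*x|$ is closer to $2n$. *)

From HB Require Import structures.
From mathcomp Require Import all_boot all_order all_algebra.
From mathcomp Require Import complex.
From mathcomp Require Import reals exp.
Set Implicit Arguments. Unset Strict Implicit. Unset Printing Implicit Defensive.
Import Order.TTheory GRing.Theory Num.Theory.
Local Open Scope ring_scope.

Section Defs.
Variable R : realType.
Variable n : nat.
Local Notation C := R[i].

Definition cmod (c : C) : R := Num.sqrt (complex.Re c ^+ 2 + complex.Im c ^+ 2).

Definition adjmx m p (A : 'M[C]_(m, p)) : 'M[C]_(p, m) := (map_mx (@conjc R) A)^T.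

Definition is_hermitian (W : 'M[C]_n) : Prop := adjmx W = W.

Definition l2norm (v : 'cV[C]_n) : R := Num.sqrt (\sum_i cmod (v i 0) ^+ 2).

Definition dotc (u v : 'cV[C]_n) : C := (adjmx u *m v) 0 0.

Definition unit_modulus (z : 'cV[C]_n) : Prop := forall i, cmod (z i 0) = 1.

Definition opnorm_le (W : 'M[C]_n) (b : R) : Prop :=
  forall v : 'cV[C]_n, l2norm (W *m v) <= b * l2norm v.

Definition infnorm_le (v : 'cV[C]_n) (b : R) : Prop := forall i, cmod (v i 0) <= b.

Definition discordant (z : 'cV[C]_n) (W : 'M[C]_n) : Prop :=
  opnorm_le W (3 * Num.sqrt (n%:R)) /\
  infnorm_le (W *m z) (3 * Num.sqrt (n%:R * ln (n%:R))).

Definition measC (z : 'cV[C]_n) (sigma : R) (W : 'M[C]_n) : 'M[C]_n :=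
  z *m adjmx z + (real_complex R sigma) *: W.

End Defs.

Definition alpha (R : realType) (t : R) (k : nat) : R :=
  iter k (fun a => 6 + (t / 2) ^+ 2 * a ^+ 3) 12.

Definition seq_cvg_to (R : realType) (a : nat -> R) (L : R) : Prop :=
  forall e : R, 0 < e -> exists N : nat, forall k : nat, (N <= k)%N -> `|a k - L| < e.

(** The maximum-likelihood inequality [z^*Cz <= x^*Cx] becomes, after expanding [C = zz^* + sigma W],
    [n^2 - |z^*x|^2 <= sigma (x^*Wx - z^*Wz)].  With [d = ||x - z||] and [s = ||x + z||] the left side
    is [(d s)^2 / 4] and the right side is [sigma Re <x - z, W(x + z)> <= 3 sigma sqrt n d s], whence
    [d s <= 12 sigma sqrt n].  Since [s >= sqrt n] this gives [d <= 12 sigma].  Using instead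
    [s^2 = 4n - d^2] and [s <= 2 sqrt n] gives [d <= 6 sigma + d^3 / (4n)]; feeding in an a priori
    bound [d <= a sigma] together with [sigma <= t sqrt n] yields [d <= (6 + (t/2)^2 a^3) sigma],
    which is the recursion defining [alpha t].  For [72 t^2 < 1] that recursion is nonincreasing and
    bounded below by [6], hence convergent, with limit at most [alpha t 1 = 6 + 432 t^2]. *)
From mathcomp Require Import all_boot all_order all_algebra.
From mathcomp Require Import complex.
From mathcomp Require Import reals.
From mathcomp Require Import classical_sets.
From mathcomp Require Import ring lra.
Set Implicit Arguments. Unset Strict Implicit. Unset Printing Implicit Defensive.
Import Order.TTheory GRing.Theory Num.Theory.
Local Open Scope ring_scope.

Lemma nonincreasing_seq_cvg_to (R : realType) (a : nat -> R) (m : R) :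
  (forall k, a k.+1 <= a k) -> (forall k, m <= a k) ->
  exists L, seq_cvg_to a L /\ forall k, L <= a k.
Proof.
move=> a_dec a_ge; set E := range a.
have E_inf : has_inf E by split; [exists (a 0%N), 0%N | exists m => _ [k _ <-]].
have inf_le k : inf E <= a k by apply: (ge_inf E_inf.2); exists k.
exists (inf E); split => // e e_gt0.
have [_ [N _ <-] aN_lt] := inf_adherent e_gt0 E_inf.
exists N => k le_Nk.
have ak_le : a k <= a N.
  have ge_trans : forall y x z : R, y <= x -> z <= y -> z <= x.
    by move=> y x z yx zy; exact: le_trans zy yx.
  exact: (homo_leq (r := fun x y => y <= x) (@lexx _ _) ge_trans a_dec le_Nk).
by rewrite ger0_norm ?subr_ge0 //; lra.
Qed.

Lemma sum_mul_le_sqrt (R : rcfType) (I : finType) (f g : I -> R) :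
  \sum_i f i * g i <= Num.sqrt (\sum_i f i ^+ 2) * Num.sqrt (\sum_i g i ^+ 2).
Proof.
set S := \sum_i f i * g i.
have lagrange : 0 <= (\sum_i f i ^+ 2) * (\sum_i g i ^+ 2) - S ^+ 2.
  set X := (X in 0 <= X).
  have -> : X = \sum_i \sum_j (f i ^+ 2 * g j ^+ 2 - f i * g i * (f j * g j)).
    rewrite /X /S expr2 !mulr_suml -sumrB; apply: eq_bigr => i _.
    by rewrite !mulr_sumr -sumrB.
  set Y := (Y in 0 <= Y); suff : 0 <= Y + Y by lra.
  have -> : Y + Y = \sum_i \sum_j (f i * g j - f j * g i) ^+ 2.
    rewrite {2}/Y exchange_big -big_split; apply: eq_bigr => i _ /=.
    by rewrite -big_split; apply: eq_bigr => j _ /=; ring.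
  by do 2!apply: sumr_ge0 => ? _; exact: sqr_ge0.
rewrite -sqrtrM ?sumr_ge0 // => [|i _]; last exact: sqr_ge0.
apply: le_trans (ler_norm S) _.
by rewrite -sqrtr_sqr ler_sqrt; [lra | apply: mulr_ge0; apply: sumr_ge0 => i _; apply: sqr_ge0].
Qed.

Lemma dist_le_of_mul_le (R : realFieldType) (d s r sigma : R) :
  0 <= d -> 0 <= s -> 0 <= sigma -> 0 <= r -> d ^+ 2 + s ^+ 2 = 4 * r ^+ 2 ->
  d ^+ 2 <= s ^+ 2 -> d * s <= 12 * sigma * r -> d <= 12 * sigma.
Proof.
move=> d_ge0 s_ge0 sigma_ge0 r_ge0 sum_sqr d_le_s ds_le.
have [r0 | r_neq0] := eqVneq r 0.
  have -> : d = 0 by move: sum_sqr; rewrite r0; nra.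
  by rewrite mulr_ge0.
have r_gt0 : 0 < r by rewrite lt_neqAle eq_sym r_neq0.
have r_le_s : r <= s by rewrite -(ler_pXn2r (isT : (0 < 2)%N)) ?nnegrE //; nra.
rewrite -(ler_pM2r r_gt0); nra.
Qed.

Lemma dist_bootstrap (R : realFieldType) (d s r sigma t a : R) :
  0 <= d -> 0 <= s -> 0 <= sigma -> 0 <= r -> d ^+ 2 + s ^+ 2 = 4 * r ^+ 2 ->
  d * s <= 12 * sigma * r -> 0 <= t -> sigma <= t * r -> d <= a * sigma ->
  d <= (6 + (t / 2) ^+ 2 * a ^+ 3) * sigma.
Proof.
move=> d_ge0 s_ge0 sigma_ge0 r_ge0 sum_sqr ds_le t_ge0 sigma_le d_le.
have a3sigma_ge0 : 0 <= a ^+ 3 * sigma.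
  have [-> | sigma_neq0] := eqVneq sigma 0; first by rewrite mulr0.
  have sigma_gt0 : 0 < sigma by rewrite lt_neqAle eq_sym sigma_neq0.
  have a_ge0 : 0 <= a by nra.
  by rewrite mulr_ge0 ?exprn_ge0.
have cube_ge0 : 0 <= (t / 2) ^+ 2 * (a ^+ 3 * sigma) by rewrite mulr_ge0 ?sqr_ge0.
have [r0 | r_neq0] := eqVneq r 0.
  have -> : d = 0 by move: sum_sqr; rewrite r0; nra.
  by rewrite mulrDl; lra.
have r_gt0 : 0 < r by rewrite lt_neqAle eq_sym r_neq0.
have s_le : s <= 2 * r by nra.
have ds2_le : d * s ^+ 2 <= 24 * sigma * r ^+ 2.
  have : d * s * s <= 12 * sigma * r * s by rewrite ler_wpM2r.
  have : 12 * sigma * r * s <= 12 * sigma * r * (2 * r) by rewrite ler_wpM2l ?mulr_ge0.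
  by rewrite !expr2; lra.
have cubic : 4 * r ^+ 2 * d <= 24 * sigma * r ^+ 2 + d ^+ 3.
  by move: ds2_le; rewrite -[s ^+ 2](addKr (d ^+ 2)) sum_sqr; nra.
have d_cube : d ^+ 3 <= a ^+ 3 * sigma ^+ 3.
  by rewrite -exprMn; apply: lerXn2r; rewrite ?nnegrE // (le_trans d_ge0).
have sigma_sqr : sigma ^+ 2 <= t ^+ 2 * r ^+ 2.
  by rewrite -exprMn; apply: lerXn2r; rewrite ?nnegrE ?mulr_ge0.
rewrite -(@ler_pM2l _ (4 * r ^+ 2)) ?mulr_gt0 ?exprn_gt0 //.
have -> : 4 * r ^+ 2 * ((6 + (t / 2) ^+ 2 * a ^+ 3) * sigma) =
          24 * sigma * r ^+ 2 + a ^+ 3 * sigma * (t ^+ 2 * r ^+ 2) by field.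
have : a ^+ 3 * sigma ^+ 3 <= a ^+ 3 * sigma * (t ^+ 2 * r ^+ 2).
  by rewrite [sigma ^+ 3]exprS mulrA; apply: ler_wpM2l.
lra.
Qed.

Section Alpha.
Variable R : realType.
Implicit Types (t a b : R) (k : nat).

Lemma alpha0 t : alpha t 0 = 12.
Proof. by []. Qed.

Lemma alphaS t k : alpha t k.+1 = 6 + (t / 2) ^+ 2 * alpha t k ^+ 3.
Proof. by rewrite /alpha iterS. Qed.

Lemma alpha_step_le t a b : 0 <= a -> a <= b ->
  6 + (t / 2) ^+ 2 * a ^+ 3 <= 6 + (t / 2) ^+ 2 * b ^+ 3.
Proof.
move=> a_ge0 a_le_b; rewrite lerD2l ler_wpM2l ?sqr_ge0 //.
by apply: lerXn2r; rewrite ?nnegrE // (le_trans a_ge0).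
Qed.

Lemma alpha_ge6 t k : 6 <= alpha t k.
Proof.
elim: k => [|k IHk]; first by rewrite alpha0; lra.
rewrite alphaS lerDl mulr_ge0 ?sqr_ge0 // exprn_ge0 //; lra.
Qed.

Lemma alpha1 t : alpha t 1 = 6 + 432 * t ^+ 2.
Proof. by rewrite /alpha /=; field. Qed.

(* [alpha t 1 <= alpha t 0] is exactly [72 t^2 <= 1]; monotonicity of the step propagates it. *)
Lemma alpha_nonincreasing t : 72 * t ^+ 2 < 1 -> forall k, alpha t k.+1 <= alpha t k.
Proof.
move=> t_small; elim => [|k IHk]; first by rewrite alpha1 alpha0; lra.
rewrite [alpha t k.+2]alphaS [alpha t k.+1]alphaS; apply: alpha_step_le IHk.
by have := alpha_ge6 t k.+1; lra.
Qed.

Lemma alpha_cvg t : 72 * t ^+ 2 < 1 ->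
  exists L, seq_cvg_to (alpha t) L /\ L <= 6 + 432 * t ^+ 2.
Proof.
move=> t_small.
have [L [alpha_cvgL L_le]] :=
  nonincreasing_seq_cvg_to (alpha_nonincreasing t_small) (alpha_ge6 t).
by exists L; split; rewrite // -alpha1.
Qed.

Lemma alpha_twelfth_5 : alpha (1 / 12 : R) 5 <= 13 / 2.
Proof.
have step k b : alpha (1 / 12) k <= b ->
    alpha (1 / 12 : R) k.+1 <= 6 + (1 / 576) * b ^+ 3.
  move=> alpha_le; rewrite alphaS.
  apply: le_trans (alpha_step_le _ _ alpha_le) _; first by have := alpha_ge6 (1 / 12 : R) k; lra.
  by have -> : ((1 / 12 : R) / 2) ^+ 2 = 1 / 576 by field.
have a1 : alpha (1 / 12 : R) 1 <= 9 by rewrite alpha1; lra.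
have a2 : alpha (1 / 12 : R) 2 <= 15 / 2 by apply: le_trans (step _ _ a1) _; lra.
have a3 : alpha (1 / 12 : R) 3 <= 27 / 4 by apply: le_trans (step _ _ a2) _; lra.
have a4 : alpha (1 / 12 : R) 4 <= 33 / 5 by apply: le_trans (step _ _ a3) _; lra.
by apply: le_trans (step _ _ a4) _; lra.
Qed.

Lemma sqr_lt_inv72 t : 0 <= t -> t < 1 / (6 * Num.sqrt 2) -> 72 * t ^+ 2 < 1.
Proof.
move=> t_ge0; have sqrt2_gt0 : 0 < Num.sqrt (2 : R) by rewrite sqrtr_gt0.
rewrite ltr_pdivlMr ?mulr_gt0 // => t_lt.
have p_ge0 : 0 <= t * (6 * Num.sqrt 2) by rewrite mulr_ge0 // mulr_ge0 // ltW.
have : (t * (6 * Num.sqrt 2)) ^+ 2 < 1 by nra.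
by rewrite !exprMn sqr_sqrtr //; lra.
Qed.

Lemma alpha_cvg_near6 e : 0 < e -> exists t0, 0 < t0 /\
  forall t, 0 <= t -> t <= t0 -> exists L, seq_cvg_to (alpha t) L /\ L <= 6 + e.
Proof.
move=> e_gt0; exists (Num.min (1 / 9) (e / 432)); split.
  by rewrite lt_min; apply/andP; split; [lra | rewrite divr_gt0].
move=> t t_ge0; rewrite le_min => /andP[t_le9 t_le_e].
have [|L [alpha_cvgL L_le]] := alpha_cvg (t := t); first by nra.
by exists L; split => //; nra.
Qed.

End Alpha.

Section InnerProduct.
Variables (R : realType) (n : nat).
Local Notation C := R[i].
Implicit Types (u v w z : 'cV[C]_n) (W : 'M[C]_n).

Lemma adjmxM m p r (A : 'M[C]_(m, p)) (B : 'M[C]_(p, r)) :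
  adjmx (A *m B) = adjmx B *m adjmx A.
Proof. by rewrite /adjmx map_mxM trmx_mul. Qed.

Lemma dotcE u v : dotc u v = \sum_i conjc (u i 0) * v i 0.
Proof. by rewrite /dotc mxE; apply: eq_bigr => i _; rewrite !mxE. Qed.

Lemma dotcC u v : dotc u v = conjc (dotc v u).
Proof.
rewrite !dotcE rmorph_sum; apply: eq_bigr => i _.
by rewrite rmorphM /= conjcK mulrC.
Qed.

Lemma dotc_hermitian W u v : is_hermitian W -> dotc u (W *m v) = dotc (W *m u) v.
Proof. by move=> W_herm; rewrite /dotc adjmxM W_herm mulmxA. Qed.

Lemma dotc_measC z sigma W u v :
  dotc u (measC z sigma W *m v) = dotc u z * dotc z v + real_complex R sigma * dotc u (W *m v).
Proof.
rewrite /dotc /measC mulmxDl mulmxDr -scalemxAl -scalemxAr -mulmxA mulmxA.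
by rewrite [LHS]mxE [X in X + _]mxE big_ord1 [X in _ + X]mxE.
Qed.

(* [C^n] viewed as [R^(n * 2)], so that [rdot] becomes a real dot product. *)
Definition rcoord u (p : 'I_n * bool) : R :=
  if p.2 then complex.Re (u p.1 0) else complex.Im (u p.1 0).

Definition rdot u v : R := complex.Re (dotc u v).

Lemma rdotE u v : rdot u v = \sum_p rcoord u p * rcoord v p.
Proof.
rewrite /rdot dotcE raddf_sum -(pair_bigA _ (fun i b => rcoord u (i, b) * rcoord v (i, b))).
apply: eq_bigr => i _.
by rewrite big_bool /rcoord /=; case: (u i 0) => ? ?; case: (v i 0) => ? ? /=; ring.
Qed.

Lemma rcoordD u v p : rcoord (u + v) p = rcoord u p + rcoord v p.
Proof. by rewrite /rcoord !mxE; case: p.2; rewrite raddfD. Qed.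

Lemma rcoordN u p : rcoord (- u) p = - rcoord u p.
Proof. by rewrite /rcoord !mxE; case: p.2; rewrite raddfN. Qed.

Lemma rdotC u v : rdot u v = rdot v u.
Proof. by rewrite !rdotE; apply: eq_bigr => p _; rewrite mulrC. Qed.

Lemma rdotDl u v w : rdot (u + v) w = rdot u w + rdot v w.
Proof. by rewrite !rdotE -big_split; apply: eq_bigr => p _; rewrite rcoordD mulrDl. Qed.

Lemma rdotNl u v : rdot (- u) v = - rdot u v.
Proof. by rewrite !rdotE -sumrN; apply: eq_bigr => p _; rewrite rcoordN mulNr. Qed.

Lemma rdotDr u v w : rdot u (v + w) = rdot u v + rdot u w.
Proof. by rewrite rdotC rdotDl !(rdotC u). Qed.

Lemma rdotNr u v : rdot u (- v) = - rdot u v.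
Proof. by rewrite rdotC rdotNl rdotC. Qed.

Lemma l2normE u : l2norm u = Num.sqrt (\sum_p rcoord u p ^+ 2).
Proof.
rewrite /l2norm -(pair_bigA _ (fun i b => rcoord u (i, b) ^+ 2)); congr Num.sqrt.
apply: eq_bigr => i _.
by rewrite big_bool /cmod sqr_sqrtr // addr_ge0 ?sqr_ge0.
Qed.

Lemma l2norm_sqr u : l2norm u ^+ 2 = rdot u u.
Proof.
rewrite l2normE sqr_sqrtr; last by apply: sumr_ge0 => p _; exact: sqr_ge0.
by rewrite rdotE; apply: eq_bigr => p _; rewrite expr2.
Qed.

Lemma rdot_le_l2norm u v : rdot u v <= l2norm u * l2norm v.
Proof. by rewrite rdotE !l2normE; exact: sum_mul_le_sqrt. Qed.

Lemma Re_real_complexM (r : R) (c : C) :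
  complex.Re (real_complex R r * c) = r * complex.Re c.
Proof. by case: c => ? ? /=; ring. Qed.

Lemma rdot_hermitian W u v : is_hermitian W -> rdot u (W *m v) = rdot v (W *m u).
Proof. by move=> W_herm; rewrite /rdot dotc_hermitian // dotcC; case: (dotc _ _). Qed.

Lemma dotc_self u : dotc u u = real_complex R (l2norm u ^+ 2).
Proof.
have Im_dotc : complex.Im (dotc u u) = 0.
  by rewrite dotcE raddf_sum big1 // => i _; case: (u i 0) => ? ? /=; ring.
by rewrite l2norm_sqr /rdot; move: Im_dotc; case: (dotc u u) => ? ? /= ->.
Qed.

Lemma l2norm_unit_modulus z : unit_modulus z -> l2norm z ^+ 2 = n%:R.
Proof.
move=> z_unit; rewrite sqr_sqrtr; last by apply: sumr_ge0 => i _; exact: sqr_ge0.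
by rewrite (eq_bigr (fun _ => 1)) => [|i _]; rewrite ?sumr_const ?card_ord ?z_unit ?expr1n.
Qed.

End InnerProduct.

Section MaximumLikelihood.
Variables (R : realType) (n : nat) (z x : 'cV[R[i]]_n) (W : 'M[R[i]]_n) (sigma q : R).
Hypotheses (z_unit : unit_modulus z) (x_norm : l2norm x ^+ 2 = n%:R).
Hypothesis zx_real : dotc z x = real_complex R q.

Lemma rdot_zx : rdot z x = q.
Proof. by rewrite /rdot zx_real. Qed.

Lemma l2norm_sub_sqr : l2norm (x - z) ^+ 2 = 2 * n%:R - 2 * q.
Proof.
rewrite l2norm_sqr rdotDl !rdotDr !rdotNl !rdotNr -!l2norm_sqr.
by rewrite x_norm l2norm_unit_modulus // (rdotC x) rdot_zx; ring.
Qed.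

Lemma l2norm_add_sqr : l2norm (x + z) ^+ 2 = 2 * n%:R + 2 * q.
Proof.
rewrite l2norm_sqr rdotDl !rdotDr -!l2norm_sqr.
by rewrite x_norm l2norm_unit_modulus // (rdotC x) rdot_zx; ring.
Qed.

Hypotheses (W_herm : is_hermitian W) (sigma_ge0 : 0 <= sigma).
Hypothesis x_ml : dotc z (measC z sigma W *m z) <= dotc x (measC z sigma W *m x).

Lemma ml_gap : n%:R ^+ 2 - q ^+ 2 <= sigma * rdot (x - z) (W *m (x + z)).
Proof.
have xz_real : dotc x z = real_complex R q by rewrite dotcC zx_real conjc_real.
move: x_ml; rewrite !dotc_measC xz_real zx_real dotc_self l2norm_unit_modulus //.
rewrite lecE => /andP[_]; rewrite !raddfD /= !Re_real_complexM -!/(rdot _ _).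
rewrite rdotDr !rdotDl !rdotNl (rdot_hermitian z) //.
(* the cross terms [<x, W z>] and [<z, W x>] cancel *)
by rewrite !expr2; nra.
Qed.

Hypothesis W_op : opnorm_le W (3 * Num.sqrt n%:R).

Lemma ml_dist_mul_le : l2norm (x - z) * l2norm (x + z) <= 12 * sigma * Num.sqrt n%:R.
Proof.
set d := l2norm (x - z); set s := l2norm (x + z); set r := Num.sqrt n%:R.
have ds_ge0 : 0 <= d * s by rewrite mulr_ge0 ?sqrtr_ge0.
have bound_ge0 : 0 <= 12 * sigma * r by rewrite !mulr_ge0 ?sqrtr_ge0.
have gap_ds : n%:R ^+ 2 - q ^+ 2 = (d * s) ^+ 2 / 4.
  by rewrite exprMn l2norm_sub_sqr l2norm_add_sqr; field.
have cs : rdot (x - z) (W *m (x + z)) <= d * (3 * r * s).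
  by apply: le_trans (rdot_le_l2norm _ _) _; rewrite ler_wpM2l ?sqrtr_ge0 // -mulrA W_op.
have := ml_gap; rewrite gap_ds => gap_le.
have : (d * s) ^+ 2 <= 12 * sigma * r * (d * s).
  by have := ler_wpM2l sigma_ge0 cs; lra.
nra.
Qed.

End MaximumLikelihood.

Theorem mainTheorem8 (R : realType) (n : nat) (z x : 'cV[R[i]]_n)
    (W : 'M[R[i]]_n) (sigma : R) :
  unit_modulus z ->
  is_hermitian W ->
  discordant z W ->
  0 <= sigma ->
  l2norm x ^+ 2 = n%:R ->
  dotc z (measC z sigma W *m z) <= dotc x (measC z sigma W *m x) ->
  dotc z x = real_complex R (cmod (dotc z x)) ->
  [/\ l2norm (x - z) <= 12 * sigma,
      (forall t : R, 0 <= t -> sigma <= t * Num.sqrt (n%:R) ->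
         forall k : nat, l2norm (x - z) <= alpha t k * sigma),
      (forall t : R, 0 <= t -> t < 1 / (6 * Num.sqrt 2) ->
         exists L : R, seq_cvg_to (alpha t) L),
      (forall e : R, 0 < e -> exists t0 : R, 0 < t0 /\
         forall t : R, 0 <= t -> t <= t0 ->
           exists L : R, seq_cvg_to (alpha t) L /\ L <= 6 + e)
    & (sigma <= Num.sqrt (n%:R) / 12 -> l2norm (x - z) <= (13 / 2) * sigma)].
Proof.
(* only the operator-norm half of discordance is needed *)
move=> z_unit W_herm [W_op _] sigma_ge0 x_norm x_ml zx_real.
have q_ge0 : 0 <= cmod (dotc z x) by apply: sqrtr_ge0.
have d_sqr := l2norm_sub_sqr z_unit x_norm zx_real.
have s_sqr := l2norm_add_sqr z_unit x_norm zx_real.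
set d := l2norm (x - z) in d_sqr *; set s := l2norm (x + z) in s_sqr *.
set r := Num.sqrt n%:R.
have [d_ge0 s_ge0 r_ge0] : [/\ 0 <= d, 0 <= s & 0 <= r] by split; apply: sqrtr_ge0.
have r_sqr : r ^+ 2 = n%:R by rewrite sqr_sqrtr.
have sum_sqr : d ^+ 2 + s ^+ 2 = 4 * r ^+ 2 by rewrite d_sqr s_sqr r_sqr; ring.
have d_le_s : d ^+ 2 <= s ^+ 2 by rewrite d_sqr s_sqr; lra.
have ds_le := ml_dist_mul_le z_unit x_norm zx_real W_herm sigma_ge0 x_ml W_op.
have bound12 := dist_le_of_mul_le d_ge0 s_ge0 sigma_ge0 r_ge0 sum_sqr d_le_s ds_le.
have bound_alpha t : 0 <= t -> sigma <= t * r -> forall k, d <= alpha t k * sigma.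
  move=> t_ge0 sigma_le; elim => [|k IHk]; first by rewrite alpha0.
  by rewrite alphaS; apply: (dist_bootstrap d_ge0 s_ge0 sigma_ge0 r_ge0 sum_sqr ds_le).
split => // [t t_ge0 t_lt | | sigma_le].
- by have [L [alpha_cvgL _]] := alpha_cvg (sqr_lt_inv72 t_ge0 t_lt); exists L.
- exact: alpha_cvg_near6.
have sigma_le' : sigma <= 1 / 12 * r by rewrite mulrC mulrA mulr1.
apply: le_trans (bound_alpha (1 / 12) _ sigma_le' 5%N) _; first lra.
by rewrite ler_wpM2r ?alpha_twelfth_5.
Qed.
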